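(* Let $R$ be an associative ring with identity and $a,b,c,d\in R$ such that both $a^{\|(b,c)}$ and $d^{\|(b,c)}$ exist. Let $b^{-}$, $c^{-}$ be any (fixed) inner inverses of $b$, $c$, and put $e=bb^{-}$, $f=c^{-}c$. Then $a^{\|(b,c)}de+1-e$ and $fda^{\|(b,c)}+1-f$ are invertible and $(a^{\|(b,c)}de+1-e)^{-1}=d^{\|(b,c)}ae+1-e$ and $(fda^{\|(b,c)}+1-f)^{-1}=fad^{\|(b,c)}+1-f$.
   Context: For $a,b,c\in R$, $a$ is $(b,c)$-invertible if there exists $y\in R$ with $y\in (bRy)\cap(yRc)$, $yab=b$ and $cay=c$; such $y$ is unique and denoted $a^{\|(b,c)}$. An inner inverse of $x$ is an element $x^{-}$ with $xx^{-}x=x$. *)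

From HB Require Import structures.
From mathcomp Require Import all_boot all_order all_algebra.
Set Implicit Arguments. Unset Strict Implicit. Unset Printing Implicit Defensive.
Import GRing.Theory.
Local Open Scope ring_scope.

Definition is_bc_inverse (R : pzRingType) (a b c y : R) : Prop :=
  [/\ (exists r : R, y = b * r * y),
      (exists s : R, y = y * s * c),
      y * a * b = b
    & c * a * y = c].

Definition is_inner_inverse (R : pzRingType) (x xm : R) : Prop := x * xm * x = x.

From HB Require Import structures.
From mathcomp Require Import all_boot all_order all_algebra.
Import GRing.Theory.
Set Implicit Arguments. Unset Strict Implicit.
Local Open Scope ring_scope.

(* For an idempotent e with e w = w, the product (x e + 1 - e)(w e + 1 - e)
   collapses to x w e + 1 - e.  With x = y d and w = z a this is
   y d z a e + 1 - e = y a e + 1 - e = 1, since y d z = y and y a e = e follow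
   from the defining identities of (b,c)-inverses (e = b b^- lies in bR).
   The identities for f = c^- c are the mirror image, f lying in Rc. *)

Section IdempotentCorner.
Variables (R : pzRingType) (e : R).
Hypothesis idem_e : e * e = e.

Lemma right_corner_mul_eq1 (x w : R) :
  e * w = w -> x * w * e = e -> (x * e + 1 - e) * (w * e + 1 - e) = 1.
Proof.
move=> ew xwe; rewrite -!addrA !mulrDl !mulrDr !mulrN !mulNr !mulr1 !mul1r.
rewrite !mulrA -(mulrA x e w) ew xwe -(mulrA x e e) idem_e.
by rewrite !subrr !addr0 [w * e + _]addrC addrK addrC subrK.
Qed.

Lemma left_corner_mul_eq1 (x w : R) :
  x * e = x -> e * x * w = e -> (e * x + 1 - e) * (e * w + 1 - e) = 1.
Proof.
move=> xe exw; rewrite -!addrA !mulrDl !mulrDr !mulrN !mulNr !mulr1 !mul1r.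
rewrite !mulrA -(mulrA e x e) xe exw idem_e.
by rewrite !subrr !addr0 [e * w + _]addrC addrK addrC subrK.
Qed.

End IdempotentCorner.

Lemma inner_inverse_idem_l (R : pzRingType) (b bm : R) :
  is_inner_inverse b bm -> (b * bm) * (b * bm) = b * bm.
Proof. by move=> Hb; rewrite mulrA Hb. Qed.

Lemma inner_inverse_idem_r (R : pzRingType) (c cm : R) :
  is_inner_inverse c cm -> (cm * c) * (cm * c) = cm * c.
Proof. by move=> Hc; rewrite -mulrA (mulrA c) Hc. Qed.

Section BCInverse.
Variables (R : pzRingType) (a b c y : R).
Hypothesis y_bc : is_bc_inverse a b c y.

Lemma bc_inverse_fixl (p : R) : p * b = b -> p * y = y.
Proof. by case: y_bc => [[r ->]] _ _ _ pb; rewrite !mulrA pb. Qed.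

Lemma bc_inverse_fixr (q : R) : c * q = c -> y * q = y.
Proof. by case: y_bc => _ [s ->] _ _ cq; rewrite -!mulrA cq. Qed.

Lemma bc_inverse_mulKl (r : R) : y * a * (b * r) = b * r.
Proof. by case: y_bc => _ _ yab _; rewrite mulrA yab. Qed.

Lemma bc_inverse_mulKr (s : R) : s * c * a * y = s * c.
Proof. by case: y_bc => _ _ _ cay; rewrite -!mulrA (mulrA c) cay. Qed.

Lemma bc_inverse_mulKbc (d z : R) : is_bc_inverse d b c z ->
  y * d * z = y /\ y * a * z = z.
Proof.
case=> [[r zr]] _ _ cdz; case: y_bc => _ [s ys] _ _; split.
- by rewrite {1}ys -!mulrA (mulrA c) cdz mulrA -ys.
- by rewrite {1}zr -(mulrA b) bc_inverse_mulKl mulrA -zr.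
Qed.

End BCInverse.

Theorem mainTheorem10 (R : pzRingType) (a b c d y z bm cm : R) :
  is_bc_inverse a b c y ->   (* y = a^{||(b,c)} *)
  is_bc_inverse d b c z ->   (* z = d^{||(b,c)} *)
  is_inner_inverse b bm -> is_inner_inverse c cm ->
  let e := b * bm in let f := cm * c in
  ((y * d * e + 1 - e) * (z * a * e + 1 - e) = 1 /\
   (z * a * e + 1 - e) * (y * d * e + 1 - e) = 1) /\
  ((f * d * y + 1 - f) * (f * a * z + 1 - f) = 1 /\
   (f * a * z + 1 - f) * (f * d * y + 1 - f) = 1).
Proof.
move=> y_bc z_bc Hb Hc e f.
have idem_e : e * e = e := inner_inverse_idem_l Hb.
have idem_f : f * f = f := inner_inverse_idem_r Hc.
have eb : e * b = b by rewrite /e Hb.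
have cf : c * f = c by rewrite /f mulrA Hc.
have yae : y * a * e = e := bc_inverse_mulKl y_bc bm.
have zde : z * d * e = e := bc_inverse_mulKl z_bc bm.
have fay : f * a * y = f := bc_inverse_mulKr y_bc cm.
have fdz : f * d * z = f := bc_inverse_mulKr z_bc cm.
clearbody e f.
have [ey ez] := (bc_inverse_fixl y_bc eb, bc_inverse_fixl z_bc eb).
have [yf zf] := (bc_inverse_fixr y_bc cf, bc_inverse_fixr z_bc cf).
have [ydz yaz] := bc_inverse_mulKbc y_bc z_bc.
have [zay zdy] := bc_inverse_mulKbc z_bc y_bc.
rewrite -!(mulrA f); split; split.
- by apply: right_corner_mul_eq1; rewrite ?mulrA ?ez ?ydz.
- by apply: right_corner_mul_eq1; rewrite ?mulrA ?ey ?zay.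
- by apply: left_corner_mul_eq1; rewrite -?mulrA ?yf // (mulrA y) yaz mulrA.
- by apply: left_corner_mul_eq1; rewrite -?mulrA ?zf // (mulrA z) zdy mulrA.
Qed.
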